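(* Let $2\le n\le l$ be integers, let $L_l=\{a_1<\dots<a_l\}$ be the linearly ordered semilattice of $l$ elements, and let $t(X)=s(X)$ be an equation over $L_l$ in the variables $X=\{x_1,\dots,x_n\}$ in which every variable occurs, with $|\mathrm{Var}(t)\setminus\mathrm{Var}(s)|=k_1$ and $|\mathrm{Var}(s)\setminus\mathrm{Var}(t)|=k_2$. Then the number of irreducible components of the solution set $V(t(X)=s(X))\subseteq L_l^n$ equals $(n-k_1-k_2)(n-1)!+k_1k_2(n-2)!$.
   Context: $L_l$ has multiplication $a_ia_j=a_{\min(i,j)}$. A term is a commutative word in $x_1,\dots,x_n$; $\mathrm{Var}(t)$ is the set of variables occurring in $t$. An equation is an ordered pair of terms $t(X)=s(X)$; $P\in L_l^n$ is a solution if $t(P)=s(P)$. For a system $S$ of equations, $V(S)$ is its set of common solutions; $Y\subseteq L_l^n$ is algebraic if $Y=V(S)$ for some system $S$; an algebraic set is irreducible if it is not a proper finite union of other algebraic sets. Every algebraic set is uniquely (up to order) a finite union $Y_1\cup\dots\cup Y_m$ of irreducible algebraic sets with $Y_i\not\subseteq Y_j$ for $i\ne j$; these $Y_i$ are its irreducible components. *)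

From mathcomp Require Import all_boot.
Set Implicit Arguments. Unset Strict Implicit. Unset Printing Implicit Defensive.

(* Elements a_1 < ... < a_l of L_l are represented by the ordinals 0 < ... < l-1
   of 'I_l; the product a_i a_j = a_{min(i,j)} becomes minn on the underlying nat. *)

Definition point (n l : nat) := {ffun 'I_n -> 'I_l}.

(* A term is a (commutative) word in x_1..x_n, i.e. a finite nonempty sequence
   of variable indices; nonemptiness is imposed where terms are used. *)
Definition term (n : nat) := seq 'I_n.

(* Value of a term at a point: the product (= minimum) of the values of its letters.
   (The default l is never reached for nonempty words.) *)
Definition eval_term (n l : nat) (t : term n) (P : point n l) : nat :=
  foldr (fun i m => minn (nat_of_ord (P i)) m) l t.

Definition Var (n : nat) (t : term n) : {set 'I_n} := [set i | i \in t].

Definition equation (n : nat) := (term n * term n)%type.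

Definition is_solution (n l : nat) (e : equation n) (P : point n l) : Prop :=
  eval_term e.1 P = eval_term e.2 P.

Definition algebraic (n l : nat) (Y : {set point n l}) : Prop :=
  exists S : equation n -> Prop,
    (forall e, S e -> e.1 != [::] /\ e.2 != [::]) /\
    (forall P : point n l, P \in Y <-> (forall e, S e -> is_solution e P)).

Definition irreducible (n l : nat) (Y : {set point n l}) : Prop :=
  algebraic Y /\
  ~ (exists s : seq {set point n l},
       (forall Z, Z \in s -> algebraic Z /\ Z \proper Y) /\
       Y = \bigcup_(Z <- s) Z).

Definition irreducible_decomposition (n l : nat) (Y : {set point n l})
    (s : seq {set point n l}) : Prop :=
  (forall Z, Z \in s -> irreducible Z) /\
  (forall i j, i < size s -> j < size s -> i != j ->
      ~~ (nth set0 s i \subset nth set0 s j)) /\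
  Y = \bigcup_(Z <- s) Z.

Definition V1 (n l : nat) (e : equation n) : {set point n l} :=
  [set P : point n l | eval_term e.1 P == eval_term e.2 P].

From mathcomp Require Import all_boot.
From mathcomp Require Import fingroup perm zify.
Set Implicit Arguments. Unset Strict Implicit. Unset Printing Implicit Defensive.

(* For a point P, the points Q with [P x <= P y -> Q x <= Q y] form the cone
   of P, an irreducible algebraic set: it is cut out by the equations x = x y,
   and every equation satisfied by P holds on the whole cone.  A point solves
   t = s iff its minimum is attained both in Var t and in Var s, i.e. at a
   variable of C = Var t :&: Var s or at a pair from A = Var t :\: Var s and
   B = Var s :\: Var t.  Refining the order of a solution to a linear order
   with bottom in C, or to one whose two lowest elements come from A and B and
   are tied, exhibits V(t = s) as the union of the cones of
   |C| (n-1)! + |A| |B| (n-2)! generic points.  The values of these points are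
   their ranks, so an inclusion between two of their cones would force equal
   rank functions: the cones are pairwise incomparable, and they are the
   irreducible components because an irredundant decomposition into
   irreducible sets is unique. *)

Section Cones.

Variables n l : nat.
Implicit Types (t : term n) (P Q : point n l) (Y Z : {set point n l}).

Lemma eval_term_le t P x : x \in t -> eval_term t P <= P x.
Proof.
elim: t => [|y t IH] //=; rewrite inE => /orP [/eqP <-|/IH h]; first exact: geq_minl.
exact: leq_trans (geq_minr _ _) h.
Qed.

Lemma eval_term_mem t P : t != [::] -> exists2 x, x \in t & eval_term t P = P x.
Proof.
elim: t => [|y [|z t] IH] // _.
  by exists y; rewrite ?mem_head //=; apply/minn_idPl/ltnW.
have [x xt ext] := IH isT; rewrite /= in ext *; rewrite ext.
have [le_yx|lt_xy] := leqP (P y) (P x).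
  by exists y; rewrite ?mem_head // (minn_idPl le_yx).
by exists x; rewrite ?(minn_idPr (ltnW lt_xy)) // inE xt orbT.
Qed.

Lemma eval_term_min t P x :
  x \in t -> (forall z, z \in t -> P x <= P z) -> eval_term t P = P x.
Proof.
move=> xt Pmin; have [|y yt ey] := @eval_term_mem t P; first by case: t xt {Pmin}.
by apply/eqP; rewrite eqn_leq eval_term_le // ey Pmin.
Qed.

Lemma eval_term1 x P : eval_term [:: x] P = P x.
Proof. exact/minn_idPl/ltnW. Qed.

Lemma eval_term2 x y P : eval_term [:: x; y] P = minn (P x) (P y).
Proof. by rewrite /eval_term /= (minn_idPl (ltnW (ltn_ord (P y)))). Qed.

Definition cone P : {set point n l} :=
  [set Q : point n l | [forall x, forall y, (P x <= P y) ==> (Q x <= Q y)]].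

Lemma coneP P Q : reflect (forall x y, P x <= P y -> Q x <= Q y) (Q \in cone P).
Proof.
rewrite inE; apply: (iffP forallP) => [H x y|H x].
  by move: (H x) => /forallP /(_ y) /implyP.
by apply/forallP => y; apply/implyP/H.
Qed.

Lemma cone_refl P : P \in cone P.
Proof. exact/coneP. Qed.

Lemma subset_cone P Q : (cone P \subset cone Q) = (P \in cone Q).
Proof.
apply/subsetP/idP => [/(_ P (cone_refl P))//|/coneP PQ R /coneP RP].
by apply/coneP => x y /PQ /RP.
Qed.

Lemma cone_rank_le P Q x : P \in cone Q ->
  #|[set y | P y < P x]| <= #|[set y | Q y < Q x]|.
Proof.
move=> /coneP QP; apply/subset_leq_card/subsetP => y; rewrite !inE.
by apply: contraTT; rewrite -!leqNgt => /QP.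
Qed.

(* A minimiser of [P] on either side of [e] is also one for [Q]. *)
Lemma cone_solution (e : equation n) P Q :
  e.1 != [::] -> e.2 != [::] -> is_solution e P -> Q \in cone P -> is_solution e Q.
Proof.
move=> ne1 ne2 solP /coneP QP.
have [x xe ePx] := eval_term_mem P ne1; have [y ye ePy] := eval_term_mem P ne2.
have min_x z : z \in e.1 -> Q x <= Q z by move=> ze; apply: QP; rewrite -ePx eval_term_le.
have min_y z : z \in e.2 -> Q y <= Q z by move=> ze; apply: QP; rewrite -ePy eval_term_le.
rewrite /is_solution (eval_term_min xe min_x) (eval_term_min ye min_y).
by apply/eqP; rewrite eqn_leq !QP // -ePx -ePy solP.
Qed.

Lemma algebraic_V1 t s : t != [::] -> s != [::] -> algebraic (V1 l (t, s)).
Proof.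
move=> tn sn; exists (eq (t, s)); split; first by move=> e <-.
by move=> P; rewrite inE; split => [/eqP sol e <-|/(_ _ erefl)/eqP].
Qed.

Lemma algebraic_cone P : algebraic (cone P).
Proof.
exists (fun e => exists x y, P x <= P y /\ e = ([:: x], [:: x; y])); split.
  by move=> e [x [y [_ ->]]].
move=> Q; split => [/coneP QP e [x [y [Pxy ->]]]|sol].
  by rewrite /is_solution eval_term1 eval_term2; apply/esym/minn_idPl/QP.
apply/coneP => x y Pxy; have : is_solution ([:: x], [:: x; y]) Q by apply: sol; exists x, y.
by rewrite /is_solution eval_term1 eval_term2 => /esym/minn_idPl.
Qed.

Lemma algebraic_cone_sub Z P : algebraic Z -> P \in Z -> cone P \subset Z.
Proof.
move=> [S [Sne SZ]] /SZ solP; apply/subsetP => Q QP; apply/SZ => e Se.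
by have [ne1 ne2] := Sne e Se; apply: cone_solution ne1 ne2 (solP e Se) QP.
Qed.

Lemma irreducible_cone P : irreducible (cone P).
Proof.
split=> [|[r [rZ coneE]]]; first exact: algebraic_cone.
have := cone_refl P; rewrite coneE bigcup_seq => /bigcupP [Z Zr PZ].
have [algZ] := rZ Z Zr; rewrite properE => /andP [_ /negP]; apply.
exact: algebraic_cone_sub.
Qed.

Lemma algebraicI Y Z : algebraic Y -> algebraic Z -> algebraic (Y :&: Z).
Proof.
move=> [S1 [ne1 Y1]] [S2 [ne2 Z2]]; exists (fun e => S1 e \/ S2 e).
split=> [e [/ne1|/ne2] //|P]; rewrite inE; split.
  by move=> /andP [/Y1 sol1 /Z2 sol2] e [/sol1|/sol2].
by move=> sol; apply/andP; split; [apply/Y1|apply/Z2] => e Se; apply: sol; [left|right].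
Qed.

End Cones.

Definition irredundant (T : finType) (d : seq {set T}) : Prop :=
  forall i j, i < size d -> j < size d -> i != j ->
    ~~ (nth set0 d i \subset nth set0 d j).

Lemma irredundantP (T : finType) (d : seq {set T}) :
  irredundant d <-> uniq d /\ {in d &, forall Z W : {set T}, Z \subset W -> Z = W}.
Proof.
split=> [irr|[ud maxd] i j ilt jlt]; last first.
  apply: contra => sub; rewrite -(nth_uniq set0 ilt jlt ud).
  by apply/eqP/maxd => //; apply: mem_nth.
split.
  apply/(uniqP set0) => i j ilt jlt eij; apply/eqP/negPn/negP => /(irr i j ilt jlt).
  by rewrite eij subxx.
move=> _ _ /(nthP set0) [i ilt <-] /(nthP set0) [j jlt <-] sub.
by have [->//|/(irr i j ilt jlt)] := eqVneq i j; rewrite sub.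
Qed.

Section Decompositions.

Variables n l : nat.
Implicit Types (Y : {set point n l}) (d : seq {set point n l}).

Lemma irreducible_decomposition_cover Y d1 d2 Z :
  irreducible_decomposition Y d1 -> irreducible_decomposition Y d2 ->
  Z \in d1 -> exists2 W, W \in d2 & Z \subset W.
Proof.
move=> [irr1 [_ Y1]] [irr2 [_ Y2]] Zd1.
have [/hasP [W Wd2 ZW]|noW] := boolP (has (fun W : {set point n l} => Z \subset W) d2).
  by exists W.
have [algZ []] := irr1 Z Zd1; exists [seq Z :&: W | W <- d2]; split.
  move=> _ /mapP [W Wd2 ->]; split; first by apply: algebraicI algZ (irr2 W Wd2).1.
  rewrite properE subsetIl subsetI subxx /=.
  by apply: contra noW => ZW; apply/hasP; exists W.
apply/setP => Q; rewrite !bigcup_seq; apply/idP/bigcupP => [QZ|[_ /mapP [W _ ->]]].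
  have : Q \in Y by rewrite Y1 bigcup_seq; apply/bigcupP; exists Z.
  rewrite Y2 bigcup_seq => /bigcupP [W Wd2 QW].
  by exists (Z :&: W); [apply: map_f | rewrite inE QZ].
by rewrite inE => /andP [].
Qed.

Lemma irreducible_decomposition_size Y d1 d2 :
  irreducible_decomposition Y d1 -> irreducible_decomposition Y d2 ->
  size d1 = size d2.
Proof.
have sub d d' : irreducible_decomposition Y d -> irreducible_decomposition Y d' ->
    {subset d <= d'}.
  move=> D D' Z Zd; have [_ maxd] := (irredundantP d).1 D.2.1.
  have [W Wd' ZW] := irreducible_decomposition_cover D D' Zd.
  have [Z' Z'd WZ'] := irreducible_decomposition_cover D' D Wd'.
  have ZZ' := maxd _ _ Zd Z'd (subset_trans ZW WZ').
  by rewrite (_ : Z = W) //; apply/eqP; rewrite eqEsubset ZW ZZ'.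
move=> D1 D2; apply/perm_size/uniq_perm; last by move=> Z; apply/idP/idP; apply: sub.
  exact: ((irredundantP d1).1 D1.2.1).1.
exact: ((irredundantP d2).1 D2.2.1).1.
Qed.

Lemma irreducible_decomposition_cones Y (r : seq (point n l)) :
  uniq r -> {in r &, forall P Q, P \in cone Q -> P = Q} ->
  Y = \bigcup_(P <- r) cone P -> irreducible_decomposition Y [seq cone P | P <- r].
Proof.
move=> ur maxr Yr; split=> [_ /mapP [P _ ->]|]; first exact: irreducible_cone.
split; last by rewrite Yr big_map.
apply: (irredundantP _).2; split.
  by rewrite map_inj_in_uniq // => P Q Pr Qr PQ; apply: maxr; rewrite // -PQ cone_refl.
by move=> _ _ /mapP [P Pr ->] /mapP [Q Qr ->]; rewrite subset_cone => /maxr ->.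
Qed.

End Decompositions.

Section CountingPermutations.

Variable T : finType.
Implicit Types (a b v w : T) (D : {set T}).

Lemma card_perm_agree D (tau : {perm T}) :
  #|[set s : {perm T} | [forall x in D, s x == tau x]]| = #|~: D|`!.
Proof.
rewrite -card_perm -(card_imset (perm_on _) (mulIg tau)); apply: eq_card => s.
rewrite inE; apply/forall_inP/imsetP => [s_tau|[r r_on ->] x xD].
  exists (s * tau^-1)%g; last by rewrite mulgKV.
  apply/subsetP => x; rewrite !inE; apply: contra => xD.
  by rewrite permM (eqP (s_tau x xD)) permK.
by rewrite permM (out_perm r_on) ?inE ?xD.
Qed.

Lemma card_perm_eq1 a v : #|[set s : {perm T} | s a == v]| = #|T|.-1`!.
Proof.
rewrite -(cardsC1 a) -(card_perm_agree _ (tperm a v)); apply: eq_card => s.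
rewrite !inE; apply/eqP/forall_inP => [sa x /set1P ->|/(_ a (set11 a))].
  by rewrite sa tpermL.
by rewrite tpermL => /eqP.
Qed.

Lemma card_perm_eq2 a b v w : a != b -> v != w ->
  #|[set s : {perm T} | (s a == v) && (s b == w)]| = #|T|.-2`!.
Proof.
move=> ab vw; pose u := tperm a v b; pose tau := (tperm a v * tperm u w)%g.
have uv : u != v by rewrite -[v](tpermL a v) (inj_eq (@perm_inj _ _)) eq_sym.
have tau_a : tau a = v by rewrite permM tpermL tpermD // eq_sym.
have tau_b : tau b = w by rewrite permM tpermL.
have -> : #|T|.-2 = #|~: [set a; b]|.
  by have := cardsC [set a; b]; rewrite cards2 ab; lia.
rewrite -(card_perm_agree _ tau); apply: eq_card => s; rewrite !inE -tau_a -tau_b.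
apply/andP/forall_inP => [[/eqP sa /eqP sb] x|sab].
  by rewrite !inE => /orP [] /eqP ->; apply/eqP.
by rewrite !sab ?inE ?eqxx ?orbT.
Qed.

End CountingPermutations.

Lemma exists_sorting_perm n (k : 'I_n -> nat) :
  exists s : {perm 'I_n}, forall x y, k x < k y -> s x < s y.
Proof.
pose leT := [rel x y : 'I_n | k x <= k y].
pose e := sort leT (enum 'I_n).
have e_perm : perm_eq e (enum 'I_n) by rewrite perm_sort.
have in_e x : x \in e by rewrite (perm_mem e_perm) mem_enum.
have size_e : size e = n by rewrite (perm_size e_perm) size_enum_ord.
have idx_lt x : index x e < n by rewrite -[X in _ < X]size_e index_mem.
have idx_inj : injective (fun x => Ordinal (idx_lt x)).
  by move=> x y [] /(congr1 (nth x e)); rewrite !nth_index.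
have e_sorted : sorted leT e by apply: sort_sorted => x y; apply: leq_total.
exists (perm idx_inj) => x y; rewrite !permE /=; apply: contraTT; rewrite -!leqNgt.
have in_range z : index z e \in [pred i | i < size e] by rewrite inE size_e.
move=> /(sorted_leq_nth (fun _ _ _ => @leq_trans _ _ _) (fun _ => leqnn _) x e_sorted
         _ _ (in_range y) (in_range x)).
by rewrite /= !nth_index.
Qed.

(* Merging the two lowest ranks keeps every value equal to the number of
   strictly smaller values. *)
Definition tie01 (b : bool) (i : nat) : nat := if b && (i == 1) then 0 else i.

Lemma card_ord_lt n m : m <= n -> #|[set i : 'I_n | i < m]| = m.
Proof.
move=> mn; rewrite -sum1_card (eq_bigl (fun i : 'I_n => i < m)) => [|i]; last by rewrite inE.
by rewrite -(big_ord_widen _ (fun _ => 1) mn) sum1_card card_ord.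
Qed.

Lemma card_tie01_lt n b (v : 'I_n) :
  #|[set i : 'I_n | tie01 b i < tie01 b v]| = tie01 b v.
Proof.
have [b_v1|] := boolP (b && (v == 1 :> nat)).
  rewrite /tie01 b_v1; apply/eqP; rewrite cards_eq0; apply/eqP/setP => i.
  by rewrite !inE ltn0.
rewrite /tie01 => v_ne; rewrite (negbTE v_ne) -[RHS](card_ord_lt (ltnW (ltn_ord v))).
apply: eq_card => i; rewrite !inE.
by case: b v_ne => //= v1; case: eqP => [->|]; lia.
Qed.

Lemma card_perm_tie01_lt n b (s : {perm 'I_n}) x :
  #|[set y | tie01 b (s y) < tie01 b (s x)]| = tie01 b (s x).
Proof.
rewrite -[RHS](card_tie01_lt b (s x)) -[RHS](card_preimset _ (@perm_inj _ s)).
by apply: eq_card => y; rewrite !inE.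
Qed.

Lemma card_perm_lt n (s : {perm 'I_n}) x : #|[set y | s y < s x]| = s x.
Proof. exact: card_perm_tie01_lt false s x. Qed.

Lemma perm_rank0 n (s : {perm 'I_n}) x :
  (forall z, z != x -> s x < s z) -> s x = 0 :> nat.
Proof.
move=> x_min; rewrite -card_perm_lt; apply/eqP; rewrite cards_eq0; apply/eqP/setP => z.
rewrite !inE; have [->|zx] := eqVneq z x; first by rewrite ltnn.
by rewrite ltnNge ltnW ?x_min.
Qed.

Lemma perm_rank1 n (s : {perm 'I_n}) x y : s x < s y ->
  (forall z, z != x -> z != y -> s y < s z) -> s y = 1 :> nat.
Proof.
move=> xy y_min; rewrite -card_perm_lt -(cards1 x); apply: eq_card => z; rewrite !inE.
have [->|zx] := eqVneq z x; first by rewrite xy.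
have [->|zy] := eqVneq z y; first by rewrite ltnn.
by rewrite ltnNge ltnW ?y_min.
Qed.

Section Ranks.

Variable n : nat.
Implicit Types (s : {perm 'I_n}) (D E : {set 'I_n}).

Definition rank_in s (i : nat) D : bool := [forall x, (s x == i :> nat) ==> (x \in D)].

Lemma rank_inP s i D x : rank_in s i D -> s x = i :> nat -> x \in D.
Proof. by move=> /forallP /(_ x) /implyP sD /eqP /sD. Qed.

Lemma rank_in_perm s i D x : s x = i :> nat -> x \in D -> rank_in s i D.
Proof.
move=> sx xD; apply/forallP => y; apply/implyP => /eqP sy.
suff -> : y = x by [].
by apply/(@perm_inj _ s)/ord_inj; rewrite sx sy.
Qed.

Lemma rank_inE s (i : 'I_n) D : rank_in s i D = ((s^-1)%g i \in D).
Proof.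
apply/idP/idP => [/rank_inP|]; first by apply; rewrite permKV.
by apply: rank_in_perm; rewrite permKV.
Qed.

Lemma permV_eq s i x : ((s^-1)%g i == x) = (s x == i).
Proof. by apply/eqP/eqP => [<-|<-]; rewrite ?permKV ?permK. Qed.

Lemma card_rank_in1 (i : 'I_n) D :
  #|[set s | rank_in s i D]| = #|D| * n.-1`!.
Proof.
rewrite -sum1_card (partition_big (fun s => (s^-1)%g i) [in D]) => [|s]; last first.
  by rewrite inE rank_inE.
rewrite -sum_nat_const; apply: eq_bigr => c cD.
rewrite -[in n.-1](card_ord n) -(card_perm_eq1 c i) -sum1_card; apply: eq_bigl => s.
rewrite !inE rank_inE permV_eq.
by case: (eqVneq (s c) i) => [<-|]; rewrite ?andbF // permK cD.
Qed.

Lemma card_rank_in2 (i j : 'I_n) D E : i != j -> [disjoint D & E] ->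
  #|[set s | rank_in s i D && rank_in s j E]| = #|D| * #|E| * n.-2`!.
Proof.
move=> ij DE.
rewrite -sum1_card (partition_big (fun s => ((s^-1)%g i, (s^-1)%g j)) [in setX D E]).
  2: by move=> s; rewrite !inE !rank_inE.
rewrite -cardsX -sum_nat_const; apply: eq_bigr => -[a b]; rewrite inE /= => /andP [aD bE].
have ab : a != b by apply: contraTneq bE => <-; rewrite (disjointFr DE aD).
rewrite -[in n.-2](card_ord n) -(card_perm_eq2 ab ij) -sum1_card; apply: eq_bigl => s.
rewrite !inE !rank_inE xpair_eqE !permV_eq.
case: (eqVneq (s a) i) => [<-|]; case: (eqVneq (s b) j) => [<-|]; rewrite ?andbF //.
by rewrite !permK aD bE.
Qed.

End Ranks.

Section GenericPoints.

Variables n l : nat.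
Hypothesis nl : n <= l.
Implicit Types (b : bool) (p : {perm 'I_n}) (Q : point n l).

Fact tie01_perm_lt b p x : tie01 b (p x) < l.
Proof.
apply: leq_ltn_trans (leq_trans (ltn_ord (p x)) nl).
by rewrite /tie01; case: ifP.
Qed.

Definition gen_point b p : point n l := [ffun x => Ordinal (tie01_perm_lt b p x)].

Lemma gen_pointE b p x : gen_point b p x = tie01 b (p x) :> nat.
Proof. by rewrite ffunE. Qed.

Lemma cone_gen_point_le b p b' p' x :
  gen_point b p \in cone (gen_point b' p') -> gen_point b p x <= gen_point b' p' x.
Proof.
have rank b1 p1 : #|[set y | gen_point b1 p1 y < gen_point b1 p1 x]| = gen_point b1 p1 x.
  rewrite [RHS]gen_pointE -[RHS]card_perm_tie01_lt; apply: eq_card => y.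
  by rewrite !inE !gen_pointE.
by rewrite -rank -[X in _ <= X]rank; apply: cone_rank_le.
Qed.

(* Both points have the same sum of values, so the pointwise inequality of
   [cone_gen_point_le] is an equality. *)
Lemma cone_gen_point_eq b p p' x :
  gen_point b p \in cone (gen_point b p') -> tie01 b (p x) = tie01 b (p' x).
Proof.
move=> cone_pp'; have le_pp' y := cone_gen_point_le y cone_pp'.
have sum_gen p1 : \sum_y gen_point b p1 y = \sum_(i < n) tie01 b i.
  by rewrite [RHS](reindex_inj (@perm_inj _ p1)); apply: eq_bigr => y _; rewrite gen_pointE.
have := (@leqif_sum _ xpredT _ _ _ (fun y _ => leqif_eq (le_pp' y))).2.
rewrite !sum_gen eqxx => /esym/forall_inP/(_ x isT)/eqP.
by rewrite !gen_pointE.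
Qed.

Lemma cone_gen_point_false Q c : (forall z, Q c <= Q z) ->
  exists2 p : {perm 'I_n}, p c = 0 :> nat & Q \in cone (gen_point false p).
Proof.
move=> Q_min; have [p p_mono] := exists_sorting_perm (fun x => Q x * 2 + (x != c)).
have p_monoQ x y : Q x < Q y -> p x < p y.
  by move=> Qxy; apply: p_mono; have := leq_b1 (x != c); have := leq_b1 (y != c); lia.
exists p.
  by apply: perm_rank0 => z zc; apply: p_mono; rewrite eqxx zc; have := Q_min z; lia.
apply/coneP => x y; rewrite !gen_pointE /tie01 /=.
by apply: contraTT; rewrite -!ltnNge => /p_monoQ.
Qed.

Lemma cone_gen_point_true Q (a b : 'I_n) :
  a != b -> (forall z, Q a <= Q z) -> Q b = Q a :> nat ->
  exists p : {perm 'I_n},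
    [/\ p a = 0 :> nat, p b = 1 :> nat & Q \in cone (gen_point true p)].
Proof.
move=> ab Q_min Qba; pose r x := if x == a then 0 else if x == b then 1 else 2.
have [p p_mono] := exists_sorting_perm (fun x => Q x * 3 + r x).
have r_lt x : r x < 3 by rewrite /r; case: ifP => //; case: ifP.
have p_monoQ x y : Q x < Q y -> p x < p y.
  by move=> Qxy; apply: p_mono; have := r_lt x; have := r_lt y; lia.
have r_other z : z != a -> z != b -> r z = 2 by rewrite /r => /negbTE-> /negbTE->.
have ra : r a = 0 by rewrite /r eqxx.
have rb : r b = 1 by rewrite /r eqxx eq_sym (negbTE ab).
have pab : p a < p b by apply: p_mono; rewrite ra rb Qba; lia.
have pa : p a = 0 :> nat.
  apply: perm_rank0 => z za; have [->//|zb] := eqVneq z b.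
  by apply: p_mono; rewrite ra r_other //; have := Q_min z; lia.
have pb : p b = 1 :> nat.
  apply: perm_rank1 pab _ => z za zb; apply: p_mono.
  by rewrite rb r_other // Qba; have := Q_min z; lia.
exists p; split=> //; apply/coneP => x y; rewrite !gen_pointE /tie01 /=.
have [pxy _|pyx le_tie] := leqP (p x) (p y).
  by apply: contraTT pxy; rewrite -!ltnNge => /p_monoQ.
have px1 : p x = 1 :> nat.
  by case: (eqVneq (p x : nat) 1) le_tie => //; case: ifP => _; lia.
have py0 : p y = 0 :> nat by move: pyx; rewrite px1; lia.
have -> : x = b by apply/(@perm_inj _ p)/ord_inj; rewrite px1 pb.
have -> : y = a by apply/(@perm_inj _ p)/ord_inj; rewrite py0 pa.
by rewrite Qba.
Qed.

End GenericPoints.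

Lemma card_setI_of_cover (T : finType) (X Y : {set T}) :
  X :|: Y = setT -> #|X :&: Y| = #|T| - #|X :\: Y| - #|Y :\: X|.
Proof.
move=> XY; have := cardsUI X Y; rewrite XY cardsT.
by have := cardsID Y X; have := cardsID X Y; rewrite setIC; lia.
Qed.

Section Components.

Variables (n l : nat) (t s : term n).
Hypotheses (nl : n <= l) (n_gt1 : 1 < n) (t_ne : t != [::]) (s_ne : s != [::]).
Hypothesis Var_cover : Var t :|: Var s = [set: 'I_n].

Local Notation A := (Var t :\: Var s).
Local Notation B := (Var s :\: Var t).
Local Notation C := (Var t :&: Var s).
Local Notation gen c := (gen_point nl c.1 c.2).
Implicit Types (c : bool * {perm 'I_n}) (Q : point n l).

(* [(false, p)] stands for the linear order [p] with its bottom in [C], and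
   [(true, p)] for the order [p] with its two lowest elements, taken from [A]
   and [B], tied. *)
Definition admissible c : bool :=
  if c.1 then rank_in c.2 0 A && rank_in c.2 1 B else rank_in c.2 0 C.

Let i0 : 'I_n := Ordinal (ltnW n_gt1).
Let i1 : 'I_n := Ordinal n_gt1.

Lemma admissible_solution c : admissible c -> gen c \in V1 l (t, s).
Proof.
have eval0 (u : term n) x : x \in u -> gen c x = 0 :> nat -> eval_term u (gen c) = 0.
  by move=> xu gx0; apply/eqP; rewrite -leqn0 -gx0 eval_term_le.
have rank0 : c.2 (c.2^-1 i0)%g = 0 :> nat by rewrite permKV.
have rank1 : c.2 (c.2^-1 i1)%g = 1 :> nat by rewrite permKV.
rewrite /admissible inE /=; case: c rank0 rank1 eval0 => -[] p /= rank0 rank1 eval0.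
  move=> /andP [/rank_inP/(_ rank0) + /rank_inP/(_ rank1)]; rewrite !inE.
  move=> /andP [_ xt] /andP [_ ys].
  by rewrite (eval0 _ _ xt) ?(eval0 _ _ ys) // gen_pointE ?rank0 ?rank1.
move=> /rank_inP/(_ rank0); rewrite !inE => /andP [xt xs].
by rewrite (eval0 _ _ xt) ?(eval0 _ _ xs) // gen_pointE rank0.
Qed.

Lemma admissible_cone_tie c c' :
  admissible c -> admissible c' -> gen c \in cone (gen c') -> c.1 = c'.1.
Proof.
case: c c' => [b p] [b' p'] adm adm' cone_cc'.
have le_cc' x := cone_gen_point_le x cone_cc'; rewrite /= in le_cc'.
have rank0 : p' (p'^-1 i0)%g = 0 :> nat by rewrite permKV.
have rank1 : p' (p'^-1 i1)%g = 1 :> nat by rewrite permKV.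
case: b b' adm adm' le_cc' {cone_cc'} => -[] //= adm adm' le_cc'.
  have := le_cc' (p'^-1 i0)%g; rewrite !gen_pointE rank0 leqn0 /tie01 /=.
  have := rank_inP adm' rank0; rewrite !inE => /andP [xt xs].
  case: (eqVneq (p (p'^-1 i0)%g : nat) 1) => [px1 _|_ /eqP px0].
    by have := rank_inP (andP adm).2 px1; rewrite !inE xt.
  by have := rank_inP (andP adm).1 px0; rewrite !inE xs.
have := le_cc' (p'^-1 i1)%g; have := le_cc' (p'^-1 i0)%g.
rewrite !gen_pointE rank0 rank1 /tie01 /= !leqn0 => /eqP px0 /eqP px1.
have : (p'^-1 i0)%g = (p'^-1 i1)%g by apply/(@perm_inj _ p)/ord_inj; rewrite px0 px1.
by move/(@perm_inj _ _) => /(congr1 val).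
Qed.

Lemma admissible_cone_inj c c' :
  admissible c -> admissible c' -> gen c \in cone (gen c') -> c = c'.
Proof.
move=> adm adm' cone_cc'; have := admissible_cone_tie adm adm' cone_cc'.
case: c c' adm adm' cone_cc' => [b p] [b' p'] /= adm adm' cone_cc' eq_b; subst b'.
congr pair; apply/permP => x; apply: ord_inj.
have := cone_gen_point_eq x cone_cc'; case: b adm adm' {cone_cc'} => //= adm adm'.
rewrite /tie01 /=; case: eqP => px1; case: eqP => p'x1 //=; first by rewrite px1 p'x1.
  move=> /esym p'x0; have := rank_inP (andP adm).2 px1.
  by have := rank_inP (andP adm').1 p'x0; rewrite !inE => /andP [_ ->].
move=> px0; have := rank_inP (andP adm').2 p'x1.
by have := rank_inP (andP adm).1 px0; rewrite !inE => /andP [_ ->].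
Qed.

Lemma V1_minimizers Q : Q \in V1 l (t, s) ->
  exists x y, [/\ x \in t, y \in s, forall z, Q x <= Q z & Q y = Q x :> nat].
Proof.
rewrite inE => /eqP /= eq_ts.
have [x xt ex] := eval_term_mem Q t_ne; have [y ys ey] := eval_term_mem Q s_ne.
exists x, y; split=> // [z|]; last by rewrite -ex -ey eq_ts.
have : z \in Var t :|: Var s by rewrite Var_cover inE.
by rewrite -ex !inE => /orP [zt|zs]; [|rewrite eq_ts]; apply: eval_term_le.
Qed.

Lemma V1_cone_cover Q : Q \in V1 l (t, s) -> exists2 c, admissible c & Q \in cone (gen c).
Proof.
move=> /V1_minimizers [x [y [xt ys x_min Qyx]]].
have y_min z : Q y <= Q z by rewrite Qyx.
have from_C z : z \in C -> (forall w, Q z <= Q w) ->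
    exists2 c, admissible c & Q \in cone (gen c).
  move=> zC z_min; have [p pz Qp] := cone_gen_point_false nl z_min.
  by exists (false, p) => //; apply: rank_in_perm pz zC.
have [xs|xns] := boolP (x \in s); first by apply: (from_C x) => //; rewrite !inE xt xs.
have [yt|ynt] := boolP (y \in t); first by apply: (from_C y) => //; rewrite !inE yt ys.
have xy : x != y by apply: contraNneq xns => ->.
have [p [px py Qp]] := cone_gen_point_true nl xy x_min Qyx.
exists (true, p) => //; apply/andP; split.
  by apply: rank_in_perm px _; rewrite !inE xt xns.
by apply: rank_in_perm py _; rewrite !inE ys ynt.
Qed.

Lemma card_admissible :
  #|[set c | admissible c]| = #|C| * n.-1`! + #|A| * #|B| * n.-2`!.
Proof.
transitivity (\sum_b \sum_(p | admissible (b, p)) 1).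
  rewrite (eq_bigr _ (fun b _ => big_mkcond _ _)) pair_bigA -sum1_card big_mkcond.
  by apply: eq_bigr => -[b p] _; rewrite inE.
rewrite big_bool addnC !sum1_card.
have AB : [disjoint A & B].
  by rewrite disjoint_subset; apply/subsetP => x; rewrite !inE => /andP [_ ->].
rewrite -(card_rank_in1 i0) -(@card_rank_in2 _ i0 i1) //.
by congr (_ + _); apply: eq_card => p; rewrite !inE.
Qed.

Definition generic_points : seq (point n l) :=
  [seq gen c | c <- enum [set c | admissible c]].

Lemma size_generic_points :
  size generic_points = #|C| * n.-1`! + #|A| * #|B| * n.-2`!.
Proof. by rewrite size_map -cardE card_admissible. Qed.

Lemma irreducible_decomposition_V1 :
  irreducible_decomposition (V1 l (t, s)) [seq cone P | P <- generic_points].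
Proof.
apply: irreducible_decomposition_cones.
- rewrite map_inj_in_uniq ?enum_uniq // => c c'; rewrite !mem_enum !inE => adm adm' gen_cc'.
  by apply: admissible_cone_inj; rewrite // gen_cc' cone_refl.
- move=> _ _ /mapP [c + ->] /mapP [c' + ->]; rewrite !mem_enum => /[1!inE] adm /[1!inE] adm'.
  by move=> cc'; rewrite (admissible_cone_inj adm adm' cc').
apply/setP => Q; rewrite big_map bigcup_seq; apply/idP/bigcupP => [/V1_cone_cover|].
  by case=> c adm Qc; exists c; rewrite // mem_enum inE.
case=> c; rewrite mem_enum inE => /admissible_solution sol_c.
by apply/subsetP: Q; apply: algebraic_cone_sub sol_c; apply: algebraic_V1.
Qed.

End Components.

Theorem mainTheorem5 (n l : nat) (t s : term n) (k1 k2 : nat) :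
  2 <= n -> n <= l ->
  t != [::] -> s != [::] ->
  Var t :|: Var s = [set: 'I_n] ->
  #|Var t :\: Var s| = k1 ->
  #|Var s :\: Var t| = k2 ->
  let N := (n - k1 - k2) * (n.-1)`! + k1 * k2 * (n.-2)`! in
  (exists d : seq {set point n l},
     irreducible_decomposition (V1 l (t, s)) d /\ size d = N) /\
  (forall d : seq {set point n l},
     irreducible_decomposition (V1 l (t, s)) d -> size d = N).
Proof.
move=> n_gt1 nl t_ne s_ne Var_cover card_A card_B N.
have decV := irreducible_decomposition_V1 nl n_gt1 t_ne s_ne Var_cover.
have size_decV : size [seq cone P | P <- generic_points t s nl] = N.
  rewrite size_map size_generic_points // (card_setI_of_cover Var_cover).
  by rewrite card_ord card_A card_B.
split; first by exists [seq cone P | P <- generic_points t s nl].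
by move=> d dec; rewrite (irreducible_decomposition_size dec decV).
Qed.
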